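(* In the smooth setting described in the context, let $\hat p\in P$ and let $x,\bar x\in\mathbb{R}^n$. If $\pi_i=\nabla f_i(x)$ and $\bar\pi_i=\nabla f_i(\bar x)$ for $i\in[m]$, then $$\sum_{i=1}^m\hat p_i\,W_{f_i^*}(\pi_i;\bar\pi_i)\ge\frac{1}{2L_f}\Big\|\sum_{i=1}^m\hat p_i(\pi_i-\bar\pi_i)\Big\|^2.$$
   Context: Smooth setting: $P\subseteq\{p\in\mathbb{R}^m:\sum_ip_i=1,p\ge0\}$ is closed convex; each $f_i:\mathbb{R}^n\to\mathbb{R}$ is convex and differentiable with Lipschitz continuous gradient, and $f_i^*$ is its Fenchel conjugate. For $p\in P$, $L_p$ denotes the Lipschitz constant of $\nabla(\sum_ip_if_i)$, and $L_f:=\max_{p\in P}L_p$. For $\pi_i\in\mathrm{dom}f_i^*$ and $\bar\pi_i=\nabla f_i(\bar x)$, the Bregman distance is $W_{f_i^*}(\pi_i;\bar\pi_i)=f_i^*(\pi_i)-f_i^*(\bar\pi_i)-\langle\bar x,\pi_i-\bar\pi_i\rangle$, where $\bar x\in\partial f_i^*(\bar\pi_i)$ is used as the subgradient of $f_i^*$ at $\bar\pi_i$. *)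

From HB Require Import structures.
From mathcomp Require Import all_boot all_order all_algebra.
From mathcomp Require Import all_classical all_reals all_analysis.
Set Implicit Arguments. Unset Strict Implicit. Unset Printing Implicit Defensive.
Import Order.TTheory GRing.Theory Num.Theory.
Import numFieldNormedType.Exports.
Local Open Scope classical_set_scope.
Local Open Scope ring_scope.

Section Defs.
Variable R : realType.

Definition dotp {n : nat} (u v : 'rV[R]_n) : R := \sum_(j < n) u 0 j * v 0 j.
Definition enorm {n : nat} (u : 'rV[R]_n) : R := Num.sqrt (dotp u u).

Definition grad {n : nat} (f : 'rV[R]_n -> R) (x : 'rV[R]_n) : 'rV[R]_n :=
  \row_(j < n) 'D_(delta_mx 0 j) f x.

Definition convex_fun {n : nat} (f : 'rV[R]_n -> R) : Prop :=
  forall (x y : 'rV[R]_n) (t : R), 0 <= t <= 1 ->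
    f (t *: x + (1 - t) *: y) <= t * f x + (1 - t) * f y.

Definition convex_subset {m : nat} (P : set 'rV[R]_m) : Prop :=
  forall (p q : 'rV[R]_m) (t : R), P p -> P q -> 0 <= t <= 1 ->
    P (t *: p + (1 - t) *: q).

Definition in_simplex {m : nat} (p : 'rV[R]_m) : Prop :=
  \sum_(i < m) p 0 i = 1 /\ forall i, 0 <= p 0 i.

Definition lipschitz_with {n : nat} (g : 'rV[R]_n -> 'rV[R]_n) (L : R) : Prop :=
  forall x y, enorm (g x - g y) <= L * enorm (x - y).

Definition lipconst {n : nat} (g : 'rV[R]_n -> 'rV[R]_n) : R :=
  inf [set L | 0 <= L /\ lipschitz_with g L].

Definition Lp {m n : nat} (f : 'I_m -> 'rV[R]_n -> R) (p : 'rV[R]_m) : R :=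
  lipconst (grad (fun x => \sum_(i < m) p 0 i * f i x)).

(* L_f := max_{p in P} L_p (taken as a supremum) *)
Definition Lf {m n : nat} (P : set 'rV[R]_m) (f : 'I_m -> 'rV[R]_n -> R) : R :=
  sup [set Lp f p | p in P].

Definition fconj {n : nat} (f : 'rV[R]_n -> R) (y : 'rV[R]_n) : \bar R :=
  ereal_sup [set (dotp x y - f x)%:E | x in [set: 'rV[R]_n]].

(* Bregman distance W_{f^*}(pi; pibar) with subgradient xbar of f^* at pibar *)
Definition Wconj {n : nat} (f : 'rV[R]_n -> R) (xbar pi pibar : 'rV[R]_n) : \bar R :=
  (fconj f pi - fconj f pibar - (dotp xbar (pi - pibar))%:E)%E.

End Defs.

From HB Require Import structures.
From mathcomp Require Import all_boot all_order all_algebra.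
From mathcomp Require Import all_classical all_reals all_analysis.
From mathcomp Require Import ring lra.
Import Order.TTheory GRing.Theory Num.Theory.
Import numFieldNormedType.Exports.
Local Open Scope classical_set_scope.
Local Open Scope ring_scope.

(** The Fenchel conjugate is attained at gradients, f^*(grad f z) = <z, grad f z> - f z,
    so W_{f_i^*}(grad f_i x; grad f_i xbar) is the Bregman distance of f_i from x to xbar,
    and the weighted sum is the Bregman distance of F = sum_i phat_i f_i, whose gradient is
    sum_i phat_i grad f_i.  If grad F is L-Lipschitz, the descent lemma at xbar along
    (grad F x - grad F xbar) / L, compared with the tangent plane of F at x, gives
    |grad F x - grad F xbar|^2 <= 2 L D_F(x, xbar).  Taking the infimum over such L yields
    the bound with L_phat, and L_phat <= L_f. *)

Section Euclidean.
Context {R : realType} {n : nat}.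
Implicit Types (u v w : 'rV[R]_n) (c : R).

Lemma dotpC u v : dotp u v = dotp v u.
Proof. by apply: eq_bigr => j _; rewrite mulrC. Qed.

Lemma dotpDl u v w : dotp (u + v) w = dotp u w + dotp v w.
Proof. by rewrite /dotp -big_split; apply: eq_bigr => j _; rewrite !mxE mulrDl. Qed.

Lemma dotpZl c u v : dotp (c *: u) v = c * dotp u v.
Proof. by rewrite /dotp mulr_sumr; apply: eq_bigr => j _; rewrite !mxE mulrA. Qed.

Lemma dotp0l v : dotp 0 v = 0.
Proof. by rewrite -(scale0r 0) dotpZl mul0r. Qed.

Lemma dotpBl u v w : dotp (u - v) w = dotp u w - dotp v w.
Proof. by rewrite dotpDl -scaleN1r dotpZl mulN1r. Qed.

Lemma dotpDr u v w : dotp w (u + v) = dotp w u + dotp w v.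
Proof. by rewrite dotpC dotpDl !(dotpC w). Qed.

Lemma dotpZr c u v : dotp v (c *: u) = c * dotp v u.
Proof. by rewrite dotpC dotpZl dotpC. Qed.

Lemma dotpBr u v w : dotp w (u - v) = dotp w u - dotp w v.
Proof. by rewrite dotpC dotpBl !(dotpC w). Qed.

Lemma dotp_suml m (c : 'I_m -> R) (a : 'I_m -> 'rV[R]_n) v :
  dotp (\sum_(i < m) c i *: a i) v = \sum_(i < m) c i * dotp (a i) v.
Proof. by elim/big_ind2: _ => [|? ? ? ? <- <-|i _]; rewrite ?dotp0l ?dotpDl ?dotpZl. Qed.

Lemma dotp_delta u j : dotp u (delta_mx 0 j) = u 0 j.
Proof.
rewrite /dotp (bigD1 j) //= big1 ?addr0; first by rewrite mxE !eqxx mulr1.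
by move=> k kj; rewrite mxE eqxx /= (negbTE kj) mulr0.
Qed.

Lemma dotpp_ge0 u : 0 <= dotp u u.
Proof. by apply: sumr_ge0 => j _; rewrite -expr2 sqr_ge0. Qed.

Lemma dotpp_eq0 u : (dotp u u == 0) = (u == 0).
Proof.
apply/idP/eqP => [|->]; last by rewrite dotp0l.
rewrite psumr_eq0 => [/allP u0|j _]; last by rewrite -expr2 sqr_ge0.
by apply/rowP => j; apply/eqP; rewrite mxE -sqrf_eq0 expr2 (implyP (u0 j _)) ?mem_index_enum.
Qed.

Lemma enorm_sqr u : enorm u ^+ 2 = dotp u u.
Proof. by rewrite sqr_sqrtr // dotpp_ge0. Qed.

Lemma enorm_ge0 u : 0 <= enorm u.
Proof. exact: sqrtr_ge0. Qed.

Lemma dotp_sqr_le u v : dotp u v ^+ 2 <= dotp u u * dotp v v.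
Proof.
have [->|u0] := eqVneq u 0; first by rewrite !dotp0l expr0n mul0r.
have uu_gt0 : 0 < dotp u u by rewrite lt_def dotpp_eq0 u0 dotpp_ge0.
have := dotpp_ge0 ((dotp u v / dotp u u) *: u - v).
rewrite dotpBl !dotpBr !dotpZl !dotpZr (dotpC v u).
set a := dotp u u; set b := dotp v v; set c := dotp u v.
have -> : c / a * (c / a * a) - c / a * c - (c / a * c - b) = b - c ^+ 2 / a.
  by field; rewrite gt_eqF.
by rewrite subr_ge0 ler_pdivrMr // mulrC.
Qed.

Lemma dotp_le_enorm u v : dotp u v <= enorm u * enorm v.
Proof.
rewrite -sqrtrM ?dotpp_ge0 //; apply: le_trans (ler_norm _) _.
by rewrite -sqrtr_sqr ler_wsqrtr // dotp_sqr_le.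
Qed.

Lemma ler_enormD u v : enorm (u + v) <= enorm u + enorm v.
Proof.
rewrite -(ler_pXn2r (_ : 0 < 2)%N) ?nnegrE ?addr_ge0 ?enorm_ge0 //.
rewrite enorm_sqr dotpDl !dotpDr (dotpC v u) sqrrD !enorm_sqr.
by have := dotp_le_enorm u v; lra.
Qed.

Lemma enormZ c u : enorm (c *: u) = `|c| * enorm u.
Proof. by rewrite /enorm dotpZl dotpZr mulrA -expr2 sqrtrM ?sqr_ge0 // sqrtr_sqr. Qed.

Lemma ler_enorm_sum m (c : 'I_m -> R) (a : 'I_m -> 'rV[R]_n) :
  enorm (\sum_(i < m) c i *: a i) <= \sum_(i < m) `|c i| * enorm (a i).
Proof.
elim/big_ind2: _ => [|u x v y uv vy|i _]; last by rewrite enormZ.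
- by rewrite /enorm dotp0l sqrtr0.
- by apply: le_trans (ler_enormD _ _) _; apply: lerD.
Qed.

End Euclidean.

Lemma is_derive_along {R : realType} {V : normedModType R} (F : V -> R) y h t dF :
  is_derive (t *: h + y) h F dF -> is_derive t 1 (fun s : R => F (s *: h + y)) dF.
Proof.
move=> [dFh <-].
have quotient_eq :
    (fun s : R => s^-1 *: (((fun s => F (s *: h + y)) \o shift t) (s *: 1) - F (t *: h + y))) =
    (fun s : R => s^-1 *: ((F \o shift (t *: h + y)) (s *: h) - F (t *: h + y))).
  by apply/funext => s /=; rewrite [s *: 1]mulr1 scalerDl addrA.
by split; rewrite /derivable /derive quotient_eq.
Qed.

Section Gradient.
Context {R : realType} {n : nat}.
Implicit Types (F : 'rV[R]_n -> R) (x v : 'rV[R]_n).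

Lemma derive_grad F x v : differentiable F x -> 'D_v F x = dotp (grad F x) v.
Proof.
move=> dF; rewrite deriveE // {1}(row_sum_delta v) linear_sum /dotp.
by apply: eq_bigr => j _; rewrite linearZ /= mxE deriveE // mulrC.
Qed.

Lemma is_derive_grad F x v : differentiable F x -> is_derive x v F (dotp (grad F x) v).
Proof. by move=> dF; rewrite -derive_grad //; apply/derivableP/diff_derivable. Qed.

End Gradient.

Section WeightedSum.
Context {R : realType} {n m : nat}.
Variables (c : 'I_m -> R) (f : 'I_m -> 'rV[R]_n -> R).

Let wsum_fctE : (fun z => \sum_(i < m) c i * f i z) = \sum_(i < m) (c i \*: f i).
Proof. by apply/funext => z; rewrite fct_sumE. Qed.

Lemma differentiable_wsum x : (forall i, differentiable (f i) x) ->
  differentiable (fun z => \sum_(i < m) c i * f i z) x.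
Proof. by move=> df; rewrite wsum_fctE; apply: differentiable_sum => i; apply: differentiableZ. Qed.

Lemma grad_wsum x : (forall i, differentiable (f i) x) ->
  grad (fun z => \sum_(i < m) c i * f i z) x = \sum_(i < m) c i *: grad (f i) x.
Proof.
move=> df; apply/rowP => j; rewrite !mxE summxE wsum_fctE.
have dsum := is_derive_sum
  (fun i => is_deriveZ (c i) (is_derive_grad _ _ (delta_mx 0 j) (df i))).
by rewrite derive_val; apply: eq_bigr => i _; rewrite dotp_delta !mxE.
Qed.

Lemma convex_fun_wsum : (forall i, 0 <= c i) -> (forall i, convex_fun (f i)) ->
  convex_fun (fun z => \sum_(i < m) c i * f i z).
Proof.
move=> c_ge0 cvx x y t t01; rewrite !mulr_sumr -big_split; apply: ler_sum => i _ /=.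
by rewrite mulrCA [(1 - t) * _]mulrCA -mulrDr ler_wpM2l // cvx.
Qed.

End WeightedSum.

Section Bregman.
Context {R : realType} {n : nat}.
Implicit Types (F : 'rV[R]_n -> R) (x y z : 'rV[R]_n).

Definition bregman F x y := F y - F x - dotp (grad F x) (y - x).

Lemma derive_le_convex F x y : convex_fun F -> differentiable F x ->
  'D_(y - x) F x <= F y - F x.
Proof.
move=> cvx dF.
have quotient_cvg : (fun t : R => t^-1 *: (F (t *: (y - x) + x) - F x)) @ 0^'+ --> 'D_(y - x) F x.
  have quotient_cvg0 : (fun t : R => t^-1 *: (F (t *: (y - x) + x) - F x)) @ 0^' --> 'D_(y - x) F x.
    exact: diff_derivable.
  apply: cvg_trans quotient_cvg0; apply: cvg_app.
  by apply: within_subset => t /= t_gt0; rewrite gt_eqF.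
apply: (cvgr_to_le quotient_cvg); near=> t.
have t_gt0 : 0 < t by near: t; exact: nbhs_right_gt.
have t_lt1 : t < 1 by near: t; exact: nbhs_right_lt.
have -> : t *: (y - x) + x = t *: y + (1 - t) *: x.
  by rewrite scalerBr scalerBl scale1r addrA addrAC.
have := cvx y x t; rewrite (ltW t_gt0) (ltW t_lt1) => /(_ isT) Fconv.
rewrite ler_pdivrMl //; lra.
Unshelve. all: by end_near. Qed.

Lemma bregman_ge0 F x y : convex_fun F -> differentiable F x -> 0 <= bregman F x y.
Proof. by move=> cvx dF; rewrite subr_ge0 -derive_grad // derive_le_convex. Qed.

Lemma bregman_wsum m (c : 'I_m -> R) (f : 'I_m -> 'rV[R]_n -> R) x y :
  (forall i, differentiable (f i) x) ->
  bregman (fun z => \sum_(i < m) c i * f i z) x y = \sum_(i < m) c i * bregman (f i) x y.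
Proof.
move=> df; rewrite /bregman grad_wsum // dotp_suml -!sumrB.
by apply: eq_bigr => i _; ring.
Qed.

Lemma fconj_grad F z : convex_fun F -> (forall x, differentiable F x) ->
  fconj F (grad F z) = (dotp z (grad F z) - F z)%:E.
Proof.
move=> cvx dF; apply/eqP; rewrite eq_le; apply/andP; split.
  apply: ge_ereal_sup => _ [w _ <-]; rewrite lee_fin.
  have := bregman_ge0 F z w cvx (dF z); rewrite /bregman dotpBr !(dotpC _ (grad F z)); lra.
by apply: ereal_sup_ubound; exists z.
Qed.

Lemma Wconj_grad F x y : convex_fun F -> (forall z, differentiable F z) ->
  Wconj F y (grad F x) (grad F y) = (bregman F x y)%:E.
Proof.
move=> cvx dF; rewrite /Wconj !fconj_grad // -!EFinB; congr (_%:E).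
rewrite /bregman !dotpBr (dotpC _ y) (dotpC _ x); lra.
Qed.

End Bregman.

Section Smooth.
Context {R : realType} {n : nat}.
Implicit Types (F : 'rV[R]_n -> R) (x y h : 'rV[R]_n).

Lemma descent_lemma F L y h : (forall z, differentiable F z) ->
  lipschitz_with (grad F) L ->
  F (h + y) <= F y + dotp (grad F y) h + L / 2 * dotp h h.
Proof.
move=> dF Lip; set B := dotp h h; set c0 := dotp (grad F y) h.
pose k := (fun t => F (t *: h + y)) - c0 \*: id - (L / 2 * B) \*: (id * id : R -> R).
have dk (t : R) : is_derive t (1 : R) k
    (dotp (grad F (t *: h + y)) h - c0 *: 1 - (L / 2 * B) *: (t *: 1 + t *: 1)).
  have dline := is_derive_along F y h t _ (is_derive_grad _ _ h (dF (t *: h + y))).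
  by apply: is_deriveB.
have [c /[!in_itv] /andP[c_gt0 _] k10] := MVT ltr01 (fun t _ => dk t)
  (derivable_within_continuous (fun t _ => @ex_derive _ _ _ _ _ _ _ (dk t))).
have slope_le : dotp (grad F (c *: h + y)) h - c0 <= L * c * B.
  rewrite -dotpBl; apply: le_trans (dotp_le_enorm _ _) _.
  have := Lip (c *: h + y) y; rewrite addrK enormZ gtr0_norm // => Lip_c.
  apply: le_trans (ler_wpM2r (enorm_ge0 h) Lip_c) _.
  by rewrite -!mulrA -expr2 enorm_sqr.
have kE t : k t = F (t *: h + y) - c0 * t - L / 2 * B * (t * t) by [].
have : k 1 - k 0 <= 0.
  rewrite k10 subr0 mulr1 /GRing.scale /= !mulr1; lra.
rewrite !kE scale1r scale0r add0r; lra.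
Qed.

Lemma bregman_cocoercive F L x y : convex_fun F -> (forall z, differentiable F z) ->
  lipschitz_with (grad F) L -> 0 <= L ->
  enorm (grad F x - grad F y) ^+ 2 <= 2 * L * bregman F x y.
Proof.
move=> cvx dF Lip; rewrite le_eqVlt => /predU1P[L0|L_gt0].
  have := Lip x y; rewrite -L0 !mul0r => d_le0.
  have -> : enorm (grad F x - grad F y) = 0 by apply/le_anti; rewrite d_le0 enorm_ge0.
  by rewrite mulr0 mul0r expr0n.
rewrite -ler_pdivrMl ?mulr_gt0 // enorm_sqr.
set d := grad F x - grad F y; set h := L^-1 *: d.
have descent := descent_lemma F L y h dF Lip.
have above_tangent := bregman_ge0 F x (h + y) cvx (dF x).
rewrite /bregman -[h + y - x]addrA dotpDr in above_tangent.
have hh : L / 2 * dotp h h = L^-1 * dotp d d / 2 by rewrite dotpZl dotpZr; field; rewrite gt_eqF.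
have dd : dotp d d = dotp (grad F x) d - dotp (grad F y) d by rewrite dotpBl.
have -> : (2 * L)^-1 * dotp d d = L^-1 * dotp d d / 2 by field; rewrite gt_eqF.
rewrite /bregman; move: descent above_tangent; rewrite hh /h !dotpZr dd; lra.
Qed.

End Smooth.

Lemma le_inf_mulr {R : realType} (S : set R) a b : S !=set0 -> 0 <= b ->
  (forall L, S L -> a <= L * b) -> a <= inf S * b.
Proof.
move=> [L0 SL0] b_ge0 aS; have [b0|b_gt0] := eqVneq b 0.
  by rewrite b0 mulr0 -(mulr0 L0) -b0 aS.
have {b_gt0}b_gt0 : 0 < b by rewrite lt_def b_gt0.
rewrite -ler_pdivrMr //; apply: lb_le_inf; first by exists L0.
by move=> L SL; rewrite ler_pdivrMr // aS.
Qed.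

Lemma lipconst_le {R : realType} {n : nat} {g : 'rV[R]_n -> 'rV[R]_n} {L : R} :
  0 <= L -> lipschitz_with g L -> lipconst g <= L.
Proof. by move=> L_ge0 Lip; apply: ge_inf => //; exists 0 => ? []. Qed.

Lemma in_simplex_le1 {R : realType} {m : nat} (p : 'rV[R]_m) i : in_simplex p -> p 0 i <= 1.
Proof. by move=> [<- p_ge0]; rewrite (bigD1 i) //= lerDl sumr_ge0. Qed.

Section WeightedLipschitz.
Context {R : realType} {n m : nat} {f : 'I_m -> 'rV[R]_n -> R} {L : 'I_m -> R}.
Hypothesis df : forall i z, differentiable (f i) z.
Hypothesis Lip : forall i, lipschitz_with (grad (f i)) (L i).

Lemma lipschitz_grad_wsum (c : 'I_m -> R) :
  lipschitz_with (grad (fun z => \sum_(i < m) c i * f i z)) (\sum_(i < m) `|c i| * `|L i|).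
Proof.
move=> z w; rewrite !grad_wsum // -sumrB mulr_suml.
under eq_bigr do rewrite -scalerBr.
apply: le_trans (ler_enorm_sum _ _ _) _; apply: ler_sum => i _.
rewrite -mulrA ler_wpM2l //; apply: le_trans (Lip i z w) _.
by rewrite ler_wpM2r ?enorm_ge0 ?ler_norm.
Qed.

Lemma Lp_le_Lf (P : set 'rV[R]_m) p : (forall q, P q -> in_simplex q) -> P p ->
  Lp f p <= Lf P f.
Proof.
move=> simplexP Pp; apply: sup_upper_bound; last by exists p.
split; first by exists (Lp f p), p.
exists (\sum_(i < m) `|L i|) => _ [q Pq <-].
have [_ q_ge0] := simplexP q Pq.
have Lq_ge0 : 0 <= \sum_(i < m) `|q 0 i| * `|L i| by apply: sumr_ge0 => i _; rewrite mulr_ge0.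
apply: le_trans (lipconst_le Lq_ge0 (lipschitz_grad_wsum _)) _.
apply: ler_sum => i _; rewrite ger0_norm // ler_piMl //.
exact/in_simplex_le1/simplexP.
Qed.

End WeightedLipschitz.

Theorem lemma3p5 (R : realType) (m n : nat) (P : set 'rV[R]_m)
  (f : 'I_m -> 'rV[R]_n -> R) (phat : 'rV[R]_m) (x xbar : 'rV[R]_n) :
  closed P -> convex_subset P -> (forall p, P p -> in_simplex p) ->
  (forall i, convex_fun (f i)) ->
  (forall i y, differentiable (f i) y) ->
  (forall i, exists L : R, lipschitz_with (grad (f i)) L) ->
  P phat ->
  (\sum_(i < m) (phat 0 i)%:E *
      Wconj (f i) xbar (grad (f i) x) (grad (f i) xbar) >=
   ((2 * Lf P f)^-1 *
      enorm (\sum_(i < m) phat 0 i *: (grad (f i) x - grad (f i) xbar)) ^+ 2)%:E)%E.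
Proof.
move=> _ _ simplexP cvx df /choice[L Lip] Pphat.
have [_ phat_ge0] := simplexP _ Pphat.
pose F z := \sum_(i < m) phat 0 i * f i z.
have dF z : differentiable F z by apply: differentiable_wsum => i; apply: df.
have cvxF : convex_fun F by apply: convex_fun_wsum.
have B_ge0 : 0 <= bregman F x xbar by apply: bregman_ge0.
rewrite (eq_bigr (fun i => (phat 0 i * bregman (f i) x xbar)%:E)) => [|i _]; last first.
  by rewrite Wconj_grad.
rewrite sumEFin -bregman_wsum // lee_fin.
have -> : \sum_(i < m) phat 0 i *: (grad (f i) x - grad (f i) xbar) = grad F x - grad F xbar.
  by rewrite !grad_wsum // -sumrB; under eq_bigr do rewrite scalerBr.
set D := enorm _ ^+ 2.
have D_le : D <= Lp f phat * (2 * bregman F x xbar).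
  apply: le_inf_mulr; last 1 first.
  - by move=> L' [L'_ge0 LipL']; rewrite mulrA [L' * 2]mulrC bregman_cocoercive.
  - exists (\sum_(i < m) `|phat 0 i| * `|L i|); split.
      by apply: sumr_ge0 => i _; rewrite mulr_ge0.
    exact: (lipschitz_grad_wsum df Lip (fun i => phat 0 i)).
  - by rewrite mulr_ge0.
have {D_le}D_le : D <= Lf P f * (2 * bregman F x xbar).
  by apply: le_trans D_le _; rewrite ler_wpM2r ?mulr_ge0 // (Lp_le_Lf df Lip _ _ simplexP Pphat).
have [Lf_gt0|Lf_le0] := ltP 0 (Lf P f).
  by rewrite ler_pdivrMl ?mulr_gt0 // [2 * _]mulrC -mulrA.
have -> : D = 0 by apply/le_anti; rewrite sqr_ge0 (le_trans D_le) // mulr_le0_ge0 ?mulr_ge0.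
by rewrite mulr0.
Qed.
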